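(* Let $\varphi\colon\mathcal{A}\to\mathcal{A}^*$ be a substitution of constant length and let $\pi\colon X_\varphi\to Y$ be a factor map onto some subshift $Y$. Then there is a constant $K$ such that $|\pi^{-1}(y)|\leq K$ for every nonperiodic $y\in Y$.
   Context: Substitutions are growing, of constant length $k\ge 2$ here ($|\varphi(a)|=k$ for all $a$), acting on $\mathcal{A}^{\mathbf{Z}}$ by concatenation. $T$ is the shift $(Tx)_n=x_{n+1}$. $X_\varphi=\{x\in\mathcal{A}^{\mathbf{Z}}:$ every finite factor of $x$ appears in $\varphi^n(a)$ for some $a$, $n\geq0\}$. A subshift is a closed shift-invariant subset of $\mathcal{B}^{\mathbf{Z}}$; a factor map is a continuous surjection commuting with the shifts. $y$ is periodic if $T^py=y$ for some $p\geq1$. *)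

From mathcomp Require Import all_boot all_order all_algebra.
Set Implicit Arguments. Unset Strict Implicit. Unset Printing Implicit Defensive.
Import Order.TTheory GRing.Theory Num.Theory.
Local Open Scope ring_scope.

Definition biseq (A : Type) := int -> A.

Definition shift (A : Type) (x : biseq A) : biseq A := fun n => x (n + 1).
Definition shiftinv (A : Type) (x : biseq A) : biseq A := fun n => x (n - 1).

Definition subst_word (A : Type) (phi : A -> seq A) (w : seq A) : seq A :=
  flatten (map phi w).
Definition subst_iter (A : Type) (phi : A -> seq A) (n : nat) (a : A) : seq A :=
  iter n (subst_word phi) [:: a].

Definition const_length_subst (A : Type) (phi : A -> seq A) (k : nat) : Prop :=
  (2 <= k)%N /\ forall a, size (phi a) = k.

Definition window (A : Type) (x : biseq A) (i : int) (n : nat) : seq A :=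
  [seq x (i + j%:Z) | j <- iota 0 n].

Definition Xsub (A : eqType) (phi : A -> seq A) (x : biseq A) : Prop :=
  forall (i : int) (n : nat), exists (a : A) (m : nat),
    infix (window x i n) (subst_iter phi m a).

Definition agree (A : Type) (n : nat) (x y : biseq A) : Prop :=
  forall i : int, (`|i|%N <= n)%N -> x i = y i.

(* Subshift: closed (in the product topology) and shift-invariant. *)
Definition subshift (B : Type) (Y : biseq B -> Prop) : Prop :=
  (forall y, Y y -> Y (shift y)) /\
  (forall y, Y y -> Y (shiftinv y)) /\
  (forall y, (forall n, exists y', Y y' /\ agree n y y') -> Y y).

(* Factor map pi : X -> Y: continuous (product topology), surjective,
   commuting with the shifts. pi is a total function, constrained only on X. *)
Definition factor_map (A B : Type) (X : biseq A -> Prop) (Y : biseq B -> Prop)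
  (pi : biseq A -> biseq B) : Prop :=
  (forall x, X x -> Y (pi x)) /\
  (forall y, Y y -> exists x, X x /\ pi x = y) /\
  (forall x, X x -> pi (shift x) = shift (pi x)) /\
  (forall x, X x -> forall n : nat, exists m : nat,
      forall x', X x' -> agree m x x' -> agree n (pi x) (pi x')).

Definition periodic (B : Type) (y : biseq B) : Prop :=
  exists p : nat, (1 <= p)%N /\ iter p (@shift B) y = y.

From Stdlib Require Import Classical ClassicalEpsilon FunctionalExtensionality.
From mathcomp Require Import all_boot all_order all_algebra zify.
Import Order.TTheory GRing.Theory Num.Theory.

Set Implicit Arguments.
Unset Strict Implicit.
Unset Printing Implicit Defensive.

(* A factor map is a sliding block code of some radius r.  If y is not
   periodic, then for arbitrarily large H the windows of length 4H of y
   starting in [-2H, -H) are pairwise distinct: otherwise the short periods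
   found at the scales 2^j H0 would propagate to a global period of y.  Given
   pairwise distinct preimages of y, which already differ on some [-D, D],
   the windows of length L = 4H + 2(D + r) of the preimages starting at these
   H positions are then pairwise distinct.  But X_phi has at most
   |A|^2 k L factors of length L, each of them sitting inside the image of a
   two-letter word under a power phi^j with k^j <= k L; taking H > 2(D + r)
   bounds the number of preimages by 5 k |A|^2. *)

Section SubstWords.
Variables (A : Type) (phi : A -> seq A) (k : nat).
Hypothesis size_phi : forall a, size (phi a) = k.

Lemma subst_word_cat u v :
  subst_word phi (u ++ v) = subst_word phi u ++ subst_word phi v.
Proof. by rewrite /subst_word map_cat flatten_cat. Qed.

Lemma size_subst_word u : size (subst_word phi u) = k * size u.
Proof.
elim: u => [|a u IH]; first by rewrite muln0.
by rewrite -cat1s subst_word_cat size_cat IH /subst_word /= cats0 size_phi mulnS.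
Qed.

Lemma size_subst_iter m a : size (subst_iter phi m a) = k ^ m.
Proof. by elim: m => [|m IH] //=; rewrite size_subst_word IH expnS. Qed.

Lemma iter_subst_word_cat m u v :
  iter m (subst_word phi) (u ++ v) =
  iter m (subst_word phi) u ++ iter m (subst_word phi) v.
Proof. by elim: m => //= m ->; rewrite subst_word_cat. Qed.

Lemma iter_subst_wordE m u :
  iter m (subst_word phi) u = flatten [seq subst_iter phi m b | b <- u].
Proof.
elim: u => [|b u IH]; first by elim: m => //= m ->.
by rewrite /= -IH -cat1s iter_subst_word_cat.
Qed.

Lemma subst_iterD i j a :
  subst_iter phi (i + j) a = flatten [seq subst_iter phi j b | b <- subst_iter phi i a].
Proof. by rewrite -iter_subst_wordE /subst_iter -iterD addnC. Qed.
End SubstWords.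

Lemma take_drop_catl (T : Type) L o (u v : seq T) :
  o + L <= size u -> take L (drop o (u ++ v)) = take L (drop o u).
Proof.
move=> hLu; rewrite drop_cat; case: ltnP => ho.
  by rewrite takel_cat // size_drop; lia.
have -> : L = 0 by lia.
by rewrite !take0.
Qed.

Lemma factor_of_blocks (I T : Type) (g : I -> seq T) n s p w q :
  (forall b, size (g b) = n) -> 0 < size w <= n ->
  flatten [seq g b | b <- s] = p ++ w ++ q ->
  exists b c (o : 'I_n), w = take (size w) (drop o (g b ++ g c)).
Proof.
move=> size_g hw; elim: s p => [|b s IH] p /= e.
  by move/(congr1 size): e; rewrite !size_cat /=; lia.
have hwE : w = take (size w) (drop (size p) (g b ++ flatten [seq g c | c <- s])).
  by rewrite e drop_size_cat // take_size_cat.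
case: (ltnP (size p) n) => [hp | hnp]; last first.
  apply: (IH (drop n p)).
  move/(congr1 (drop n)): e; rewrite drop_size_cat // drop_cat; case: ltnP => //.
  move=> hpn; have -> : n = size p by lia.
  by rewrite subnn drop0 drop_size.
have hsize := congr1 size e; rewrite !size_cat size_g in hsize.
exists b; case: s hwE hsize {IH e} => [|c s] hwE hsize /=.
  exists b, (Ordinal hp); rewrite cats0 in hwE; rewrite {1}hwE /=.
  by rewrite take_drop_catl // size_g; move: hsize => /=; lia.
exists c, (Ordinal hp); rewrite {1}hwE /= catA take_drop_catl // size_cat !size_g; lia.
Qed.

Lemma Xsub_linear_complexity (A : finType) (phi : A -> seq A) k :
  const_length_subst phi k -> forall L, 0 < L ->
  exists S : seq (seq A), size S <= #|A| ^ 2 * k * L /\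
    forall x n, Xsub phi x -> window x n L \in S.
Proof.
move=> [k_gt1 size_phi] L L_gt0; set j := up_log k L.
have L_le : L <= k ^ j by exact: up_logP.
have kj_le : k ^ j <= k * L.
  case ej: j => [|j']; first by rewrite expn0; lia.
  have L_gt1 : 1 < L.
    case: (leqP L 1) => // L_le1.
    by move: ej; rewrite /j; have /eqP -> : up_log k L == 0 by rewrite up_log_eq0 L_le1 orbT.
  have := up_log_gtn k_gt1 L_gt1; rewrite -/j ej expnS /= => /ltnW h.
  by rewrite leq_mul2l h orbT.
pose factor (t : A * A * 'I_(k ^ j)) :=
  take L (drop t.2 (subst_iter phi j t.1.1 ++ subst_iter phi j t.1.2)).
exists (codom factor); split.
  by rewrite size_codom !card_prod card_ord mulnn -mulnA leq_mul2l kj_le orbT.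
move=> x n /(_ n L) [a [m /infixP [p [q e]]]].
have size_w : size (window x n L) = L by rewrite size_map size_iota.
move: (window x n L) size_w e => w size_w e.
case: (ltnP m j) => [m_lt | m_ge].
  have := congr1 size e; rewrite !size_cat (size_subst_iter size_phi) => size_e.
  have := @up_log_min k L m k_gt1; rewrite -/j; lia.
rewrite -(subnK m_ge) subst_iterD in e.
have size_w_le : 0 < size w <= k ^ j by lia.
have [b [c [o ->]]] := factor_of_blocks (size_subst_iter size_phi j) size_w_le e.
by apply/codomP; exists (b, c, o); rewrite /factor size_w.
Qed.

Definition cofinal (P : nat -> Prop) := forall N, exists2 j, N <= j & P j.

Lemma cofinal_pigeonhole (T : finType) (c : nat -> T) (P : nat -> Prop) :
  cofinal P -> exists v, cofinal (fun j => P j /\ c j = v).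
Proof.
move=> P_cof; apply: NNPP => no_v.
have [N hN] : exists N : T -> nat, forall v j, N v <= j -> P j -> c j <> v.
  apply: (choice (fun v N => forall j, N <= j -> P j -> c j <> v)) => v.
  apply: NNPP => no_N; apply: no_v; exists v => N.
  apply: NNPP => no_j; apply: no_N; exists N => j hj Pj cj.
  by apply: no_j; exists j.
have [j hj Pj] := P_cof (\max_v N v).
by apply: (hN (c j) j) => //; apply: leq_trans hj; apply: leq_bigmax.
Qed.

Section Agreement.
Variable A : Type.
Implicit Types x y z : biseq A.

Lemma agree_trans n x y z : agree n x y -> agree n y z -> agree n x z.
Proof. by move=> h1 h2 i hi; rewrite h1 // h2. Qed.

Lemma agree_le m n x y : m <= n -> agree n x y -> agree m x y.
Proof. by move=> hmn h i hi; apply: h; apply: leq_trans hmn. Qed.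
End Agreement.

Section Compactness.
Variables (A : finType) (xs : nat -> biseq A).

Lemma cofinal_refine n (P : nat -> Prop) : cofinal P ->
  exists j0, P j0 /\ cofinal (fun j => P j /\ agree n (xs j0) (xs j)).
Proof.
move=> P_cof.
pose c j := [ffun u : 'I_n.*2.+1 => xs j (u%:Z - n%:Z)%R].
have [v hv] := cofinal_pigeonhole c P_cof.
have [j0 _ [Pj0 cj0]] := hv 0.
exists j0; split => // N; have [j hj [Pj cj]] := hv N.
exists j => //; split => // i hi.
have hu : absz (i + n%:Z)%R < n.*2.+1 by lia.
have := congr1 (fun g : {ffun _} => g (Ordinal hu)) (etrans cj0 (esym cj)).
by rewrite !ffunE /= (_ : _ - _ = i)%R //; lia.
Qed.

Lemma cluster_point : exists xi, forall n, cofinal (fun j => agree n xi (xs j)).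
Proof.
pose close n x := cofinal (fun j => agree n x (xs j)).
have [next hnext] : exists next : nat -> biseq A -> biseq A,
    forall n x, close n x -> agree n x (next n x) /\ close n.+1 (next n x).
  suff [g hg] : exists g : nat * biseq A -> biseq A, forall nx,
      close nx.1 nx.2 -> agree nx.1 nx.2 (g nx) /\ close nx.1.+1 (g nx).
    by exists (fun n x => g (n, x)) => n x; apply: (hg (n, x)).
  apply: (choice (fun nx x' => close nx.1 nx.2 ->
    agree nx.1 nx.2 x' /\ close nx.1.+1 x')) => -[n x] /=.
  case: (classic (close n x)) => [x_close|]; last by exists x.
  have [j0 [x_j0 j0_close]] := cofinal_refine n.+1 x_close.
  exists (xs j0) => _; split => // N.
  by have [j hj [_ ?]] := j0_close N; exists j.
have [x0 x0_close] : exists x0, close 0 x0.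
  have [j0 [_ j0_close]] := cofinal_refine 0 (fun N => ex_intro2 _ _ N (leqnn N) I).
  by exists (xs j0) => N; have [j hj [_ ?]] := j0_close N; exists j.
pose z n := iteri n next x0.
have z_close n : close n (z n) by elim: n => //= n /hnext[].
have z_mono m n : m <= n -> agree m (z m) (z n).
  elim: n => [|n IH]; first by rewrite leqn0 => /eqP ->.
  rewrite leq_eqVlt ltnS => /orP[/eqP -> // | m_le_n].
  exact: agree_trans (IH m_le_n) (agree_le m_le_n (proj1 (hnext _ _ (z_close n)))).
pose xi i := z `|i|%N i.
have xi_z n : agree n xi (z n).
  by move=> i hi; apply: (z_mono _ _ hi); rewrite leqnn.
exists xi => n N; have [j hj ?] := z_close n N.
by exists j => //; apply: agree_trans (xi_z n) _.
Qed.
End Compactness.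

Definition closed_set (A : Type) (X : biseq A -> Prop) :=
  forall x, (forall n, exists x', X x' /\ agree n x x') -> X x.

Lemma uniform_continuity (A : finType) (B : Type) (X : biseq A -> Prop)
    (pi : biseq A -> biseq B) :
  closed_set X ->
  (forall x, X x -> forall n, exists m,
     forall x', X x' -> agree m x x' -> agree n (pi x) (pi x')) ->
  exists r, forall x x', X x -> X x' -> agree r x x' -> pi x 0%R = pi x' 0%R.
Proof.
move=> X_closed pi_cont; apply: NNPP => no_r.
pose bad r (p : biseq A * biseq A) :=
  [/\ X p.1, X p.2, agree r p.1 p.2 & pi p.1 0%R <> pi p.2 0%R].
have [b hb] : exists b : nat -> biseq A * biseq A, forall r, bad r (b r).
  apply: (choice bad) => r; apply: NNPP => no_p; apply: no_r; exists r.
  move=> x x' hx hx' hxx'; apply: NNPP => ne; apply: no_p; by exists (x, x').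
have [xi xi_cl] := cluster_point (fun r => (b r).1).
have X_xi : X xi.
  apply: X_closed => n; have [j _ ?] := xi_cl n 0.
  by exists (b j).1; have [] := hb j.
have [m hm] := pi_cont xi X_xi 0.
have [j hj xi_b1] := xi_cl m m; have [X1 X2 b12 pi_ne] := hb j.
have xi_b2 : agree m xi (b j).2 := agree_trans xi_b1 (agree_le hj b12).
by apply: pi_ne; rewrite -(hm _ X1 xi_b1) ?(hm _ X2 xi_b2).
Qed.

Section IntegerShifts.
Local Open Scope ring_scope.

Definition shiftz (A : Type) (t : int) (x : biseq A) : biseq A := fun n => x (n + t).

Lemma shiftzD (A : Type) t t' (x : biseq A) : shiftz t (shiftz t' x) = shiftz (t + t') x.
Proof. by apply: functional_extensionality => n; rewrite /shiftz addrA. Qed.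

Lemma shiftz0 (A : Type) (x : biseq A) : shiftz 0 x = x.
Proof. by apply: functional_extensionality => n; rewrite /shiftz addr0. Qed.

Lemma iter_shift (A : Type) (p : nat) (x : biseq A) : iter p (@shift A) x = shiftz p%:Z x.
Proof.
elim: p => [|p IH]; first by rewrite shiftz0.
by rewrite iterS IH; apply: functional_extensionality => n; rewrite /shift /shiftz; congr x; lia.
Qed.

Lemma factor_shiftz (A B : Type) (X : biseq A -> Prop) (pi : biseq A -> biseq B) :
  (forall t x, X x -> X (shiftz t x)) ->
  (forall x, X x -> pi (shift x) = shift (pi x)) ->
  forall t x, X x -> pi (shiftz t x) = shiftz t (pi x).
Proof.
move=> X_shiftz pi_shift.
have pi_pos (p : nat) x : X x -> pi (shiftz p%:Z x) = shiftz p%:Z (pi x).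
  move=> Xx; rewrite -!iter_shift; elim: p => //= p IH.
  by rewrite pi_shift ?IH // iter_shift; apply: X_shiftz.
move=> [p|p] x Xx; first exact: pi_pos.
have X_neg := X_shiftz (Negz p) x Xx.
have {2}-> : x = shiftz p.+1%:Z (shiftz (Negz p) x).
  by rewrite shiftzD (_ : _ + _ = 0) ?shiftz0 //; lia.
by rewrite pi_pos // shiftzD (_ : _ + _ = 0) ?shiftz0 //; lia.
Qed.

Lemma sliding_block_code (A : finType) (B : Type) (X : biseq A -> Prop)
    (pi : biseq A -> biseq B) :
  closed_set X ->
  (forall t x, X x -> X (shiftz t x)) ->
  (forall x, X x -> pi (shift x) = shift (pi x)) ->
  (forall x, X x -> forall n, exists m,
     forall x', X x' -> agree m x x' -> agree n (pi x) (pi x')) ->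
  exists r, forall x x' n n', X x -> X x' ->
    (forall w : int, (`|w| <= r)%N -> x (n + w) = x' (n' + w)) ->
    pi x n = pi x' n'.
Proof.
move=> X_closed X_shiftz pi_shift pi_cont.
have [r hr] := uniform_continuity X_closed pi_cont.
exists r => x x' n n' Xx Xx' xx'.
have pi_at y t (Xy : X y) : pi y t = pi (shiftz t y) 0.
  by rewrite (factor_shiftz X_shiftz pi_shift) // /shiftz add0r.
rewrite (pi_at x n) // (pi_at x' n') //; apply: hr; try exact: X_shiftz.
by move=> i hi; rewrite /shiftz addrC xx' // addrC.
Qed.
End IntegerShifts.

Lemma eq_window (A : Type) (x x' : biseq A) s s' L :
  window x s L = window x' s' L <->
  (forall v, (v < L)%N -> x (s + v%:Z)%R = x' (s' + v%:Z)%R).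
Proof.
split => [e v hv | h].
  have := congr1 (nth (x s) ^~ v) e.
  by rewrite !(nth_map 0%N) ?size_iota // nth_iota.
apply: (@eq_from_nth _ (x s)) => [|v]; rewrite !size_map !size_iota // => hv.
by rewrite !(nth_map 0%N) ?size_iota // nth_iota // h.
Qed.

Lemma Xsub_closed (A : eqType) (phi : A -> seq A) : closed_set (Xsub phi).
Proof.
move=> x h i n; have [x' [hx' xx']] := h (`|i| + n)%N.
have [a [m hm]] := hx' i n; exists a, m.
by rewrite (proj2 (eq_window x x' i i n)) // => v hv; apply: xx'; lia.
Qed.

Lemma Xsub_shiftz (A : eqType) (phi : A -> seq A) t x :
  Xsub phi x -> Xsub phi (shiftz t x).
Proof.
move=> h i n; have [a [m hm]] := h (i + t)%R n; exists a, m.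
by rewrite (proj2 (eq_window _ x i (i + t)%R n)) // => v _; rewrite /shiftz; congr x; lia.
Qed.

Section Periodicity.
Variables (B : Type) (y : biseq B).
Local Open Scope ring_scope.

Definition periodic_on (p : nat) (a b : int) :=
  forall n, a <= n -> n + p%:Z < b -> y n = y (n + p%:Z).

Lemma periodic_on_eq_mod q a b m n : (0 < q)%N -> periodic_on q a b ->
  a <= m < b -> a <= n < b -> (m = n %[mod q%:Z])%Z -> y m = y n.
Proof.
move=> q_gt0 per_q; wlog m_le_n : m n / m <= n => [hwlog|].
  by case: (lerP m n) => [|/ltW] hmn hm hn e; [|symmetry]; apply: hwlog.
move=> /andP[am _] /andP[_ nb] e.
have [c nE] : exists c : nat, n = m + (c * q)%:Z.
  have /dvdzP [d nmE] : (q%:Z %| n - m)%Z by rewrite -eqz_mod_dvd -e.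
  by exists (absz d); nia.
subst n; clear m_le_n e; elim: c nb => [|c IH] cq_b; first by rewrite addr0.
rewrite IH; last by lia.
by rewrite per_q; [congr y|..]; lia.
Qed.

Lemma periodic_on_extend q p a b a' b' : (0 < q)%N ->
  periodic_on q a b -> periodic_on p a' b' -> a <= a' -> b' <= b ->
  a' + q%:Z + p%:Z <= b' -> periodic_on p a b.
Proof.
move=> q_gt0 per_q per_p aa' bb' long n an nb.
pose n' := a' + ((n - a') %% q%:Z)%Z.
have n'_mod : (n' = n %[mod q%:Z])%Z by rewrite /n' modzDmr (addrC a') subrK.
have n'_ge : a' <= n' < a' + q%:Z by rewrite /n'; lia.
have e1 : y n' = y n by apply: (periodic_on_eq_mod q_gt0 per_q) => //; lia.
have e2 : y (n' + p%:Z) = y (n + p%:Z).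
  apply: (periodic_on_eq_mod q_gt0 per_q); try lia.
  by rewrite -modzDml n'_mod modzDml.
by rewrite -e1 -e2 per_p //; lia.
Qed.

Definition windows_distinct (H : nat) := forall t t' : int,
  - (2 * H)%:Z <= t < - H%:Z -> - (2 * H)%:Z <= t' < - H%:Z ->
  (forall u : nat, (u < 4 * H)%N -> y (t + u%:Z) = y (t' + u%:Z)) -> t = t'.

Lemma period_of_repeated_window H : ~ windows_distinct H ->
  exists p, (0 < p < H)%N /\ periodic_on p (- H%:Z) (2 * H)%:Z.
Proof.
move=> not_distinct.
have [t [t' [ht ht' tt' t_lt]]] : exists t t' : int,
    [/\ - (2 * H)%:Z <= t < - H%:Z, - (2 * H)%:Z <= t' < - H%:Z,
      forall u : nat, (u < 4 * H)%N -> y (t + u%:Z) = y (t' + u%:Z) & t < t'].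
  apply: NNPP => no_pair; apply: not_distinct => t t' ht ht' tt'.
  case: (ltgtP t t') => // [t_lt | t_gt]; exfalso; apply: no_pair.
    by exists t, t'.
  by exists t', t; split => // u hu; rewrite tt'.
exists (absz (t' - t)); split; first by lia.
move=> n n_ge n_lt; have hu : (absz (n - t) < 4 * H)%N by lia.
have := tt' _ hu; have -> : t + (absz (n - t))%:Z = n by lia.
by have -> : t' + (absz (n - t))%:Z = n + (absz (t' - t))%:Z by lia.
Qed.

Lemma nonperiodic_windows_distinct : ~ periodic y -> forall H0, (0 < H0)%N ->
  exists H, (H0 <= H)%N /\ windows_distinct H.
Proof.
move=> aper H0 H0_gt0; apply: NNPP => no_H.
pose Hj j := (2 ^ j * H0)%N.
have Hj_ge j : (H0 <= Hj j)%N by rewrite leq_pmull // expn_gt0.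
have periodic_at j : exists p, (0 < p < Hj j)%N /\ periodic_on p (- (Hj j)%:Z) (2 * Hj j)%:Z.
  by apply: period_of_repeated_window => dist; apply: no_H; exists (Hj j).
have [p [p_bd per_p]] := periodic_at 0%N; rewrite /Hj expn0 mul1n in p_bd per_p.
have per_all j : periodic_on p (- (Hj j)%:Z) (2 * Hj j)%:Z.
  elim: j => [|j IH]; first by rewrite /Hj expn0 mul1n.
  have [q [q_bd per_q]] := periodic_at j.+1.
  have HjS : Hj j.+1 = (2 * Hj j)%N by rewrite /Hj expnS mulnA.
  have := Hj_ge j; rewrite HjS in q_bd per_q * => H0_le.
  by apply: (periodic_on_extend _ per_q IH); lia.
apply: aper; exists p; split; first by lia.
rewrite iter_shift; apply: functional_extensionality => n.
have n_lt : (absz n + p < Hj (absz n + p))%N.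
  by apply: leq_trans (ltn_expl _ (ltnSn 1)) (leq_pmulr _ H0_gt0).
by rewrite /shiftz [RHS](per_all (absz n + p)%N) //; lia.
Qed.
End Periodicity.

Lemma finite_family_separated (A : Type) (I : finType) (f : I -> biseq A) :
  injective f -> exists D, forall i j, agree D (f i) (f j) -> i = j.
Proof.
move=> f_inj.
have [d hd] : exists d : I * I -> nat, forall ij,
    ij.1 = ij.2 \/ exists2 n : int, (`|n| <= d ij)%N & f ij.1 n <> f ij.2 n.
  apply: (choice (fun ij D => ij.1 = ij.2 \/
    exists2 n : int, (`|n| <= D)%N & f ij.1 n <> f ij.2 n)) => -[i j] /=.
  case: (eqVneq i j) => [<-|i_ne_j]; first by exists 0; left.
  have fij : f i <> f j by move/f_inj/eqP; rewrite (negbTE i_ne_j).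
  have [n hn] : exists n, f i n <> f j n.
    apply: NNPP => f_eq; apply: fij; apply: functional_extensionality => n.
    by apply: NNPP => hn; apply: f_eq; exists n.
  by exists `|n|%N; right; exists n.
exists (\max_ij d ij) => i j ij_agree.
case: (hd (i, j)) => //= -[n hn []]; apply: ij_agree.
by apply: leq_trans hn (leq_bigmax (i, j)).
Qed.

Section FiberBound.
Variables (A : finType) (B : Type) (X : biseq A -> Prop) (pi : biseq A -> biseq B).
Variable r : nat.
Hypothesis pi_local : forall x x' n n', X x -> X x' ->
  (forall w : int, (`|w| <= r)%N -> x (n + w)%R = x' (n' + w)%R) -> pi x n = pi x' n'.
Local Open Scope ring_scope.

Lemma window_family_injective y (I : finType) (f : I -> biseq A) D H :
  (forall i, X (f i) /\ pi (f i) = y) ->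
  (forall i j, agree D (f i) (f j) -> i = j) ->
  windows_distinct y H ->
  injective (fun iu : I * 'I_H =>
    window (f iu.1) (- (2 * H)%:Z + iu.2%:Z - (D + r)%:Z) (4 * H + 2 * (D + r))).
Proof.
move=> hf f_sep y_dist [i u] [i' u'] /= /eq_window same_window.
have [[Xi pi_i] [Xi' pi_i']] := (hf i, hf i').
set E := (D + r)%N in same_window.
have f_eq (v : int) : - E%:Z <= v < (4 * H + E)%:Z ->
    f i (- (2 * H)%:Z + u%:Z + v) = f i' (- (2 * H)%:Z + u'%:Z + v).
  move=> hv; have hv' : (absz (v + E%:Z)%R < 4 * H + 2 * E)%N by lia.
  have := same_window _ hv'.
  have -> : - (2 * H)%:Z + u%:Z - E%:Z + (absz (v + E%:Z))%:Z = - (2 * H)%:Z + u%:Z + v.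
    by lia.
  by have -> : - (2 * H)%:Z + u'%:Z - E%:Z + (absz (v + E%:Z))%:Z = - (2 * H)%:Z + u'%:Z + v
    by lia.
have [u_lt u'_lt] := (ltn_ord u, ltn_ord u').
have same_start : - (2 * H)%:Z + u%:Z = - (2 * H)%:Z + u'%:Z.
  apply: y_dist; try lia.
  move=> v hv; rewrite -{1}pi_i -pi_i'; apply: pi_local => // w hw.
  by rewrite -!(addrA _ v%:Z w) f_eq //; lia.
have uu' : u = u' by apply: ord_inj; lia.
subst u'; congr (_, _); apply: f_sep => n hn.
have n_in : - E%:Z <= n + (2 * H)%:Z - u%:Z < (4 * H + E)%:Z by lia.
have := f_eq _ n_in.
by have -> : - (2 * H)%:Z + u%:Z + (n + (2 * H)%:Z - u%:Z) = n by lia.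
Qed.

Lemma fiber_card_le (C : nat) :
  (forall L, (0 < L)%N -> exists S : seq (seq A), (size S <= C * L)%N /\
     forall x n, X x -> window x n L \in S) ->
  forall y, ~ periodic y -> forall (I : finType) (f : I -> biseq A),
  injective f -> (forall i, X (f i) /\ pi (f i) = y) -> (#|I| <= 5 * C)%N.
Proof.
move=> complexity y aper I f f_inj hf.
have [D f_sep] := finite_family_separated f_inj.
have [H [H_gt y_dist]] := nonperiodic_windows_distinct aper (ltn0Sn (2 * (D + r))).
set L := (4 * H + 2 * (D + r))%N.
have [S [size_S S_win]] := complexity L (ltac:(lia)).
pose W (iu : I * 'I_H) := window (f iu.1) (- (2 * H)%:Z + iu.2%:Z - (D + r)%:Z) L.
have W_inj : injective W := window_family_injective hf f_sep y_dist.
have card_le : (#|I| * H <= size S)%N.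
  rewrite -[H in (_ * H)%N]card_ord -card_prod cardE -(size_map W).
  apply: uniq_leq_size; first by rewrite map_inj_uniq ?enum_uniq.
  by move=> _ /mapP[[i u] _ ->]; apply: S_win; have [] := hf i.
have : (#|I| * H <= 5 * C * H)%N.
  apply: leq_trans card_le (leq_trans size_S _).
  by rewrite (mulnC 5) -mulnA leq_mul2l; apply/orP; right; rewrite /L; lia.
by rewrite leq_pmul2r //; lia.
Qed.
End FiberBound.

Theorem lemma1p15 (A B : finType) (phi : A -> seq A) (k : nat)
  (Y : biseq B -> Prop) (pi : biseq A -> biseq B) :
  const_length_subst phi k ->
  subshift Y ->
  factor_map (Xsub phi) Y pi ->
  exists K : nat, forall y : biseq B, Y y -> ~ periodic y ->
    forall f : 'I_K.+1 -> biseq A,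
      (forall i, Xsub phi (f i) /\ pi (f i) = y) ->
      exists i j : 'I_K.+1, i != j /\ f i = f j.
Proof.
move=> phi_const _ [_ [_ [pi_shift pi_cont]]].
have [r pi_local] := sliding_block_code (@Xsub_closed _ phi) (@Xsub_shiftz _ phi)
  pi_shift pi_cont.
exists (5 * (#|A| ^ 2 * k)) => y _ y_aper f hf; apply: NNPP => no_collision.
have f_inj : injective f.
  move=> i j fij; case: (eqVneq i j) => // i_ne_j.
  by case: no_collision; exists i, j.
have := fiber_card_le pi_local (Xsub_linear_complexity phi_const) y_aper f_inj hf.
by rewrite card_ord ltnn.
Qed.
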